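(* For every $n\ge1$, let $L_{2n}$ be the ladder graph with vertices ordered $v_1\prec v_2\prec\cdots\prec v_n\prec u_n\prec u_{n-1}\prec\cdots\prec u_1$. Then the ordered Ramsey number satisfies $R_o(L_{2n},L_{2n})\le 32n^3$.
   Context: The ladder graph $L_{2n}$ consists of two paths $u_1u_2\cdots u_n$ and $v_1v_2\cdots v_n$ together with the edges $u_iv_i$, $i\in[n]$. An ordered graph is a graph with a total order $\prec$ on its vertices. An ordered graph $F$ is contained in an ordered graph $H$ if there is an injective map $V(F)\to V(H)$ preserving both the vertex order and adjacency (edges map to edges). The ordered Ramsey number $R_o(F,G)$ is the smallest $N$ such that every red/blue colouring of the edges of the ordered complete graph $K_N$ contains a blue copy of $F$ or a red copy of $G$. *)

From mathcomp Require Import all_boot.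
Unset Printing Implicit Defensive.

(* An ordered graph on k vertices: vertex set 'I_k with the natural order of
   'I_k, and a symmetric irreflexive adjacency relation [adj]. *)

(* Ordered ladder L_{2n} with order v_1 < ... < v_n < u_n < ... < u_1.
   Position p (0-based) is v_{p+1} if p < n, and u_{2n-p} if p >= n.
   Edges: v_i v_{i+1}, u_i u_{i+1}, u_i v_i. *)
Definition ladder_adj (n : nat) (p q : 'I_(2 * n)) : bool :=
  [|| (p.+1 == q) && (q < n),
      (q.+1 == p) && (p < n),
      (p.+1 == q) && (n <= p),
      (q.+1 == p) && (n <= q)
    | (p + q == (2 * n).-1) ].          (* rung u_i v_i *)

(* A red/blue colouring of the ordered complete graph K_N on 'I_N:
   colour c x y for x < y, true = red, false = blue. *)

Definition has_mono_copy (k : nat) (adj : rel 'I_k) (N : nat)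
  (c : 'I_N -> 'I_N -> bool) (col : bool) : Prop :=
  exists f : 'I_k -> 'I_N,
    (forall x y : 'I_k, x < y -> f x < f y) /\
    (forall x y : 'I_k, x < y -> adj x y -> c (f x) (f y) = col).

Definition ordered_ramsey_prop (kF : nat) (F : rel 'I_kF) (kG : nat) (G : rel 'I_kG)
  (N : nat) : Prop :=
  forall c : 'I_N -> 'I_N -> bool,
    @has_mono_copy kF F N c false \/ @has_mono_copy kG G N c true.

Definition ordered_ramsey_le (kF : nat) (F : rel 'I_kF) (kG : nat) (G : rel 'I_kG)
  (M : nat) : Prop :=
  exists2 N, N <= M & @ordered_ramsey_prop kF F kG G N.

From mathcomp Require Import all_boot zify.

(* We colour pairs of naturals and look for a monochromatic ladder inside
   [0, N).  A ladder arises from a monochromatic clique on 2n vertices, or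
   from two monochromatic increasing paths P < Q on n vertices joined by
   monochromatic rungs.  An Erdos-Szekeres argument shows that
   (n - 1)(2n - 1) + 1 vertices contain an increasing path on n vertices or a
   clique on 2n vertices of the other colour; hence two such sets X < Y with
   all X-Y edges of one colour already give a ladder (bipartite_ladder).
   Consequently a chain of n blocks of twice that size is crossed by a
   monochromatic "rail" unless a ladder appears (rail).

   [0, N) is split into 2(2n - 1) blocks: left blocks P_i and mirrored right
   blocks Q_i.  By pigeonhole each index i gets a colour kappa_i such that
   many vertices of Q_i are kappa_i-rich (have many kappa_i-neighbours in
   P_i), and n indices share a colour chi.  A rail through the rich parts of
   the Q's gives the u's; the chi-neighbours of each u in the matching P
   block are the blocks of a second rail, giving the v's with chi-rungs.
   Finally N = 2(2n - 1)(4(n - 1)(2n - 1) + 1) <= 32 n^3. *)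

Lemma sorted_rcons2 (e : rel nat) t u v :
  sorted e (rcons (rcons t u) v) = sorted e (rcons t u) && e u v.
Proof. by case: t => [|x t] /=; rewrite ?andbT // rcons_path last_rcons. Qed.

Lemma sorted_iota_filter (a : pred nat) m l : sorted ltn (filter a (iota m l)).
Proof. by apply: sorted_filter; [exact: ltn_trans | exact: iota_ltn_sorted]. Qed.

Lemma sorted_mkseq (e : rel nat) (f : nat -> nat) n :
  (forall k, k.+1 < n -> e (f k) (f k.+1)) -> sorted e (mkseq f n).
Proof.
move=> step; apply/(sortedP 0) => k; rewrite size_mkseq => lt_k.
by rewrite !nth_mkseq ?step //; lia.
Qed.

Lemma pigeonhole2 (T : Type) (a : pred T) s r : size s = (r + r).-1 ->
  (r <= count a s) || (r <= count (predC a) s).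
Proof. by move=> size_s; have := count_predC a s; rewrite size_s; lia. Qed.

Lemma majority_indices (p : pred nat) n : exists chi (idx : nat -> nat),
  [/\ forall k k', k < k' -> k' < n -> idx k < idx k',
      forall k, k < n -> idx k < (2 * n).-1 &
      forall k, k < n -> p (idx k) = chi].
Proof.
set I0 := iota 0 (2 * n).-1; set chi := n <= count p I0.
set I := filter (fun i => p i == chi) I0.
have size_I : n <= size I.
  have size_I0 : size I0 = (n + n).-1 by rewrite size_iota; lia.
  rewrite size_filter; have := @pigeonhole2 _ p I0 n size_I0; rewrite /chi.
  case: (leqP n (count p I0)) => [le_n _ | _ /= le_n].
    by rewrite (eq_count (a2 := p)) // => i; rewrite eqb_id.
  by rewrite (eq_count (a2 := predC p)) // => i; rewrite eqbF_neg.
have I_in k : k < n -> nth 0 I k \in I by move=> lt_k; exact: mem_nth (leq_trans lt_k size_I).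
exists chi, (nth 0 I); split => [k k' lt_k lt_k' | k /I_in | k /I_in].
- apply: (sorted_ltn_nth ltn_trans 0); rewrite ?inE //; try lia.
  exact: sorted_iota_filter.
- by rewrite mem_filter mem_iota => /andP[].
- by rewrite mem_filter => /andP[/eqP].
Qed.

(* The Erdos-Szekeres threshold: (n - 1)(2n - 1) + 1 vertices force a path of
   n vertices or a clique of 2n vertices. *)
Definition es_size (n : nat) : nat := (n.-1 * (2 * n).-1).+1.

Definition rich_size (n : nat) : nat := (es_size n + es_size n).-1.

Definition block (m i : nat) : seq nat := iota (i * m) m.

Lemma block_before m i i' u v : i < i' -> u \in block m i -> v \in block m i' -> u < v.
Proof.
rewrite !mem_iota => lt_i /andP[_ lt_u] /andP[le_v _].
have := leq_mul lt_i (leqnn m); rewrite mulSn; lia.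
Qed.

Lemma block_lt m i K u : i < K -> u \in block m i -> u < K * m.
Proof.
rewrite mem_iota => lt_i /andP[_ lt_u].
have := leq_mul lt_i (leqnn m); rewrite mulSn; lia.
Qed.

(* Layout of [0, ramsey_bound n): 2K blocks of length [block_size n], where
   K = 2n - 1.  The left blocks P_0 < ... < P_{K-1} occupy the first half and
   the right blocks Q_i are the mirror images Q_i = block (2K - 1 - i), so
   P_0 < ... < P_{K-1} < Q_{K-1} < ... < Q_0. *)
Definition block_size (n : nat) : nat := (rich_size n + rich_size n).-1.
Definition ramsey_bound (n : nat) : nat := ((2 * n).-1 + (2 * n).-1) * block_size n.
Definition left_block (n i : nat) : seq nat := block (block_size n) i.
Definition right_block (n i : nat) : seq nat :=
  block (block_size n) (((2 * n).-1 + (2 * n).-1).-1 - i).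

Lemma left_before_left {n i i' u v} :
  i < i' -> u \in left_block n i -> v \in left_block n i' -> u < v.
Proof. exact: block_before. Qed.

Lemma left_before_right {n i i' u v} : i < (2 * n).-1 -> i' < (2 * n).-1 ->
  u \in left_block n i -> v \in right_block n i' -> u < v.
Proof. move=> lt_i lt_i'; apply: block_before; lia. Qed.

Lemma right_before_right {n i i' u v} : i < i' -> i' < (2 * n).-1 ->
  u \in right_block n i' -> v \in right_block n i -> u < v.
Proof. move=> lt_i lt_i'; apply: block_before; lia. Qed.

Lemma left_block_lt {n i u} : i < (2 * n).-1 -> u \in left_block n i -> u < ramsey_bound n.
Proof. move=> lt_i; apply: block_lt; lia. Qed.

Lemma right_block_lt {n i u} : i < (2 * n).-1 -> u \in right_block n i -> u < ramsey_bound n.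
Proof. move=> lt_i; apply: block_lt; lia. Qed.

Lemma ramsey_bound_le n : ramsey_bound n <= 32 * n ^ 3.
Proof.
case: n => [// | n].
rewrite /ramsey_bound /block_size /rich_size /es_size.
have -> : (2 * n.+1).-1 = 2 * n + 1 by lia.
have -> : ((n * (2 * n + 1)).+1 + (n * (2 * n + 1)).+1).-1 = 2 * (n * (2 * n + 1)) + 1.
  by lia.
have -> : (2 * (n * (2 * n + 1)) + 1 + (2 * (n * (2 * n + 1)) + 1)).-1 =
          4 * (n * (2 * n + 1)) + 1 by lia.
rewrite !expnS expn0; nia.
Qed.

Section Colouring.

Variable c : nat -> nat -> bool.

Definition mono_edge (k : bool) (x y : nat) : bool := (x < y) && (c x y == k).

(* A monochromatic copy of the ordered ladder L_{2n} inside [0, N): an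
   increasing sequence s of 2n vertices in which the path edges s_p s_{p+1}
   and the rungs s_p s_{2n-1-p} all have the same colour k. *)
Definition ladder_copy (n N : nat) : Prop :=
  exists (k : bool) (s : seq nat),
    [/\ size s = 2 * n, sorted ltn s, all (fun x => x < N) s &
      forall p q, p < q -> q < 2 * n -> (q == p.+1) || (p + q == (2 * n).-1) ->
        c (nth 0 s p) (nth 0 s q) = k].

Lemma ladder_copy_mono n N M : N <= M -> ladder_copy n N -> ladder_copy n M.
Proof.
move=> le_NM [k [s [size_s sorted_s s_lt_N ladder_s]]]; exists k, s; split => //.
by apply/allP => x /(allP s_lt_N) /leq_trans; apply.
Qed.

(* A monochromatic clique on 2n vertices contains every ordered graph on 2n
   vertices, in particular the ladder. *)
Lemma clique_ladder n N k s :
  pairwise (mono_edge k) s -> 2 * n <= size s -> all (fun x => x < N) s ->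
  ladder_copy n N.
Proof.
move=> clique_s size_s s_lt_N.
set t := take (2 * n) s.
have /(pairwiseP 0) clique_t : pairwise (mono_edge k) t.
  exact: subseq_pairwise (take_subseq _ _) clique_s.
have size_t : size t = 2 * n by rewrite size_take; case: ltnP; lia.
exists k, t; split => //.
- apply/(sortedP 0) => i lt_i.
  by have /andP[] := clique_t i i.+1 (ltnW lt_i) lt_i (ltnSn i).
- by apply/allP => x /mem_take /(allP s_lt_N).
- move=> p q lt_pq lt_q _; rewrite -size_t in lt_q.
  by have /andP[_ /eqP] := clique_t p q (ltn_trans lt_pq lt_q) lt_q lt_pq.
Qed.

(* Two colour-[k] increasing paths P (giving v_1 .. v_n) and Q (giving
   u_n .. u_1) of n vertices each, with P entirely before Q and colour-[k]
   rungs between the p-th vertex of P and the p-th-from-last vertex of Q. *)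
Lemma rungs_ladder n N k P Q :
  size P = n -> size Q = n -> sorted (mono_edge k) P -> sorted (mono_edge k) Q ->
  all (fun x => x < N) P -> all (fun x => x < N) Q ->
  (forall x y, x \in P -> y \in Q -> x < y) ->
  (forall p, p < n -> c (nth 0 P p) (nth 0 Q (n.-1 - p)) = k) ->
  ladder_copy n N.
Proof.
move=> size_P size_Q path_P path_Q P_lt_N Q_lt_N P_before_Q rung.
have sorted_mono s : sorted (mono_edge k) s -> sorted ltn s.
  by apply: sub_sorted => x y /andP[].
exists k, (P ++ Q); split.
- by rewrite size_cat size_P size_Q addnn mul2n.
- rewrite sorted_pairwise; last exact: ltn_trans.
  rewrite pairwise_cat -!sorted_pairwise; try exact: ltn_trans.
  by rewrite !sorted_mono // !andbT; apply/allrelP.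
- by rewrite all_cat P_lt_N Q_lt_N.
move: path_P path_Q => /(sortedP 0) path_P /(sortedP 0) path_Q.
move=> p q lt_pq lt_q edge_pq; rewrite !nth_cat size_P.
case: (ltnP q n) => [lt_qn | le_nq]; last case: (ltnP p n) => [lt_pn | le_np].
- have -> : q = p.+1 by case/orP: edge_pq => /eqP; lia.
  have lt_p : p.+1 < size P by rewrite size_P; lia.
  have -> : p < n by lia.
  by have /andP[_ /eqP] := path_P p lt_p.
- have -> : q - n = n.-1 - p by case/orP: edge_pq => /eqP; lia.
  exact: rung.
- have -> : q - n = (p - n).+1 by case/orP: edge_pq => /eqP; lia.
  have lt_p : (p - n).+1 < size Q by rewrite size_Q; lia.
  by have /andP[_ /eqP] := path_Q (p - n) lt_p.
Qed.

(* [path_end k X p v]: v is the last vertex of an increasing colour-[k] path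
   of p + 1 vertices whose first p vertices lie in X. *)
Fixpoint path_end (k : bool) (X : seq nat) (p v : nat) : bool :=
  if p is p'.+1 then has (fun u => mono_edge k u v && path_end k X p' u) X
  else true.

Lemma path_endP k X p v :
  reflect (exists2 s : seq nat, size s = p /\ all [in X] s & sorted (mono_edge k) (rcons s v))
          (path_end k X p v).
Proof.
apply: (iffP idP).
  elim: p v => [|p IH] v /=; first by exists [::].
  case/hasP => u uX /andP[uv /IH[s [size_s sX] path_s]].
  exists (rcons s u); first by rewrite size_rcons size_s all_rcons uX sX.
  by rewrite sorted_rcons2 path_s uv.
case=> s [<- sX]; elim/last_ind: s sX v => [|s u IH] //.
rewrite all_rcons size_rcons => /andP[uX sX] v.
rewrite sorted_rcons2 => /andP[path_s uv].
by apply/hasP; exists u => //; apply/andP; split; last exact: IH.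
Qed.

Lemma clique_of_no_edge k E : sorted ltn E ->
  ~~ has (fun u => has (mono_edge k u) E) E -> pairwise (mono_edge (~~ k)) E.
Proof.
rewrite sorted_pairwise; last exact: ltn_trans.
move=> /(pairwiseP 0) lt_E /hasPn no_edge; apply/(pairwiseP 0) => i j lt_i lt_j lt_ij.
have lt_nth : nth 0 E i < nth 0 E j := lt_E i j lt_i lt_j lt_ij.
have /hasPn/(_ _ (mem_nth 0 lt_j)) := no_edge _ (mem_nth 0 lt_i).
by rewrite /mono_edge lt_nth; case: (c _ _) (k).
Qed.

(* The induction on p splits X
   into the ends E of colour-[k] paths with p + 1 vertices and the rest Z. *)
Lemma path_or_clique k q p X : sorted ltn X -> p * q < size X ->
  (exists s : seq nat, [/\ size s = p.+1, all [in X] s & sorted (mono_edge k) s]) \/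
  (exists s : seq nat, [/\ all [in X] s, q < size s & pairwise (mono_edge (~~ k)) s]).
Proof.
elim: p X => [|p IH] X sorted_X size_X.
  by left; case: X {sorted_X} size_X => [|x X] // _; exists [:: x]; rewrite /= mem_head.
set E := filter (path_end k X p) X; set Z := filter (predC (path_end k X p)) X.
have sub_filter a : all [in X] (filter a X) by apply/allP => x; rewrite mem_filter => /andP[].
have sub_trans s a : all [in filter a X] s -> all [in X] s.
  by move/allP => sub; apply/allP => x /sub; rewrite mem_filter => /andP[].
have sorted_filter_X a : sorted ltn (filter a X).
  by apply: sorted_filter => //; exact: ltn_trans.
case: (ltnP (p * q) (size Z)) => [big_Z | small_Z].
  case: (IH Z (sorted_filter_X _) big_Z) => [[s [size_s sZ path_s]] | [s [sZ ? ?]]].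
    (* the last vertex of a path inside Z would be an end, i.e. lie in E *)
    exfalso; move: size_s sZ path_s; case/lastP: s => [|s v] //.
    rewrite size_rcons all_rcons => -[size_s] /andP[vZ sZ] /= path_s.
    move: vZ; rewrite mem_filter /= => /andP[/negP[]].
    by apply/path_endP; exists s; rewrite // size_s (sub_trans _ _ sZ).
  by right; exists s; rewrite (sub_trans _ _ sZ).
have big_E : q < size E.
  have split_X : size E + size Z = size X by rewrite !size_filter count_predC.
  move: size_X; rewrite mulSn; lia.
case: (boolP (has (fun u => has (mono_edge k u) E) E)) => [|no_edge].
  case/hasP => u uE /hasP[v vE uv]; left.
  move: (uE); rewrite mem_filter => /andP[+ _] => /path_endP[s [size_s sX] path_s].
  exists (rcons (rcons s u) v); split.
  - by rewrite !size_rcons size_s.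
  - by rewrite !all_rcons sX (allP (sub_filter _) u uE) (allP (sub_filter _) v vE).
  - by rewrite sorted_rcons2 path_s.
right; exists E; split => //; first exact: sub_filter.
exact: clique_of_no_edge (sorted_filter_X _) no_edge.
Qed.

Lemma path_or_ladder n N k X : 0 < n -> sorted ltn X -> es_size n <= size X ->
  all (fun x => x < N) X ->
  ladder_copy n N \/ exists P : seq nat, [/\ size P = n, all [in X] P & sorted (mono_edge k) P].
Proof.
move=> n_gt0 sorted_X size_X X_lt_N.
have [[P [size_P PX path_P]] | [s [sX size_s clique_s]]] :=
  path_or_clique k (2 * n).-1 n.-1 X sorted_X size_X.
  by right; exists P; split => //; rewrite size_P; lia.
left; apply: (@clique_ladder n N (~~ k) s clique_s); first lia.
by apply/allP => x /(allP sX) /(allP X_lt_N).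
Qed.

(* Two sets X before Y, of [es_size n] vertices each and with all X-Y edges
   of colour k, give a ladder: either one side has a clique of the other
   colour, or both have colour-[k] paths which combine by [rungs_ladder]. *)
Lemma bipartite_ladder n N k X Y : 0 < n -> sorted ltn X -> sorted ltn Y ->
  all (fun x => x < N) X -> all (fun x => x < N) Y ->
  es_size n <= size X -> es_size n <= size Y ->
  (forall x y, x \in X -> y \in Y -> (x < y) /\ c x y = k) ->
  ladder_copy n N.
Proof.
move=> n_gt0 sorted_X sorted_Y X_lt_N Y_lt_N size_X size_Y cross.
case: (@path_or_ladder _ _ k _ n_gt0 sorted_X size_X X_lt_N) => [// | [P [size_P PX path_P]]].
case: (@path_or_ladder _ _ k _ n_gt0 sorted_Y size_Y Y_lt_N) => [// | [Q [size_Q QY path_Q]]].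
have cross_PQ x y : x \in P -> y \in Q -> (x < y) /\ c x y = k.
  by move=> xP yQ; apply: cross; [exact: (allP PX) | exact: (allP QY)].
apply: (@rungs_ladder n N k P Q size_P size_Q path_P path_Q).
- by apply/allP => x /(allP PX) /(allP X_lt_N).
- by apply/allP => y /(allP QY) /(allP Y_lt_N).
- by move=> x y xP yQ; case: (cross_PQ x y xP yQ).
- move=> p lt_p; apply: (cross_PQ _ _ (mem_nth _ _) (mem_nth _ _)).2; rewrite ?size_P ?size_Q; lia.
Qed.

Section Rail.

Variables (n N : nat) (chi : bool) (C : nat -> seq nat).
Hypothesis n_gt0 : 0 < n.
Hypothesis sorted_C : forall j, j < n -> sorted ltn (C j).
Hypothesis C_lt_N : forall j, j < n -> all (fun x => x < N) (C j).
Hypothesis size_C : forall j, j < n -> rich_size n <= size (C j).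
Hypothesis C_before : forall j, j.+1 < n -> forall u v, u \in C j -> v \in C j.+1 -> u < v.

Definition rail_end (j w : nat) : Prop :=
  exists x : nat -> nat, [/\ x j = w, forall i, i <= j -> x i \in C i &
    forall i, i < j -> c (x i) (x i.+1) = chi].

Definition rail_frontier (j : nat) (W : seq nat) : Prop :=
  [/\ sorted ltn W, es_size n <= size W, all [in C j] W &
    forall w, w \in W -> rail_end j w].

Lemma rail_frontier0 : rail_frontier 0 (C 0).
Proof.
split; [exact: sorted_C | | exact: allss |].
  by have := size_C 0 n_gt0; rewrite /rich_size; lia.
by move=> w wC; exists (fun=> w); split => // i; rewrite leqn0 => /eqP ->.
Qed.

(* Extending a frontier: the vertices of C_{j+1} receiving a colour-chi edge
   from the frontier form the next frontier, unless at least [es_size n] of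
   them receive only edges of the other colour, which yields a ladder by
   [bipartite_ladder]. *)
Lemma rail_step j W : j.+1 < n -> rail_frontier j W ->
  ladder_copy n N \/ exists W', rail_frontier j.+1 W'.
Proof.
move=> lt_j [sorted_W size_W WC W_ends].
have WC' w : w \in W -> w \in C j by move/(allP WC).
set linked := fun v => has (fun u => c u v == chi) W.
set W' := filter linked (C j.+1); set U := filter (predC linked) (C j.+1).
have split_C : size W' + size U = size (C j.+1) by rewrite !size_filter count_predC.
have sorted_part a : sorted ltn (filter a (C j.+1)).
  by apply: sorted_filter; [exact: ltn_trans | exact: sorted_C].
case: (leqP (es_size n) (size U)) => [big_U | small_U].
  left; apply: (@bipartite_ladder n N (~~ chi) W U n_gt0 sorted_W (sorted_part _)) => //.
  - by apply/allP => x /WC' /(allP (C_lt_N j (ltnW lt_j))).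
  - by apply/allP => x; rewrite mem_filter => /andP[_ /(allP (C_lt_N j.+1 lt_j))].
  move=> x y xW; rewrite mem_filter => /andP[/hasPn/(_ x xW) not_chi yC].
  by split; [exact: C_before j lt_j x y (WC' x xW) yC | move: not_chi; case: (c x y) chi => -[]].
right; exists W'; split; first exact: sorted_part.
- by have := size_C j.+1 lt_j; rewrite /rich_size; lia.
- by apply/allP => v; rewrite mem_filter => /andP[].
move=> v; rewrite mem_filter => /andP[/hasP[u uW /eqP uv] vC].
have [x [xj xC xchi]] := W_ends u uW.
exists (fun i => if i == j.+1 then v else x i); split => [|i le_i|i lt_i].
- by rewrite eqxx.
- by case: eqP => [-> // | /eqP ne]; apply: xC; lia.
- rewrite (_ : (i == j.+1) = false); last by apply/eqP; lia.
  by case: eqVneq => [[->] | ne]; [rewrite xj | apply: xchi; lia].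
Qed.

Lemma rail :
  ladder_copy n N \/ exists x : nat -> nat,
    (forall j, j < n -> x j \in C j) /\ (forall j, j.+1 < n -> c (x j) (x j.+1) = chi).
Proof.
have frontier j : j < n -> ladder_copy n N \/ exists W, rail_frontier j W.
  elim: j => [_ | j IH lt_j]; first by right; exists (C 0); exact: rail_frontier0.
  by case: (IH (ltnW lt_j)) => [| [W]]; [left | apply: rail_step].
have lt_last : n.-1 < n by rewrite prednK.
case: (frontier n.-1 lt_last) => [| [[|w W] [_ size_W _ W_ends]]]; [by left | by [] |].
have [x [_ xC xchi]] := W_ends w (mem_head _ _).
by right; exists x; split => j lt_j; [apply: xC | apply: xchi]; lia.
Qed.

End Rail.

Definition rich (chi : bool) (n i y : nat) : bool :=
  rich_size n <= count (fun x => c x y == chi) (left_block n i).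

Lemma rich_or n i y : rich true n i y || rich false n i y.
Proof.
rewrite /rich; set P_i := left_block n i.
have -> : count (fun x => c x y == false) P_i = count (predC (fun x => c x y == true)) P_i.
  by apply: eq_count => x /=; case: (c x y).
by apply: pigeonhole2; rewrite size_iota.
Qed.

Definition kappa (n i : nat) : bool := rich_size n <= count (rich true n i) (right_block n i).

Definition rich_part (chi : bool) (n i : nat) : seq nat := filter (rich chi n i) (right_block n i).

Lemma size_rich_part n i : rich_size n <= size (rich_part (kappa n i) n i).
Proof.
rewrite size_filter; case kappa_i: (kappa n i) => //.
have /orP[] := @pigeonhole2 _ (rich true n i) (right_block n i) (rich_size n) (size_iota _ _).
  by rewrite /kappa in kappa_i; rewrite kappa_i.
move=> /leq_trans; apply; apply: sub_count => y /= /negbTE rich_true.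
by have := rich_or n i y; rewrite rich_true.
Qed.

(* The u's are found by a rail through the chi-rich parts of
   Q_{idx_{n-1}}, ..., Q_{idx_0}; then, for each k, the vertices of
   P_{idx_k} sending colour chi to the rung partner u-vertex are numerous
   (by richness), and a rail through them gives the v's. *)
Section Assembly.

Variables (n : nat) (chi : bool) (idx : nat -> nat).
Hypothesis n_gt0 : 0 < n.
Hypothesis idx_increasing : forall k k', k < k' -> k' < n -> idx k < idx k'.
Hypothesis idx_lt : forall k, k < n -> idx k < (2 * n).-1.
Hypothesis kappa_idx : forall k, k < n -> kappa n (idx k) = chi.

Lemma right_rail : ladder_copy n (ramsey_bound n) \/ exists x : nat -> nat,
  (forall j, j < n -> x j \in rich_part chi n (idx (n.-1 - j))) /\
  (forall j, j.+1 < n -> c (x j) (x j.+1) = chi).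
Proof.
have lt_mirror j : j < n -> n.-1 - j < n by lia.
apply: rail => // [j _ | j /lt_mirror lt_j | j /lt_mirror lt_j | j lt_j u v].
- exact: sorted_iota_filter.
- apply/allP => y; rewrite mem_filter => /andP[_].
  exact: right_block_lt (idx_lt _ lt_j).
- by rewrite -(kappa_idx _ lt_j) size_rich_part.
- rewrite !mem_filter => /andP[_ u_in] /andP[_ v_in].
  apply: (right_before_right _ _ u_in v_in); [apply: idx_increasing | apply: idx_lt]; lia.
Qed.

Lemma left_rail (x : nat -> nat) :
  (forall j, j < n -> x j \in rich_part chi n (idx (n.-1 - j))) ->
  ladder_copy n (ramsey_bound n) \/ exists z : nat -> nat,
    (forall k, k < n -> z k \in left_block n (idx k) /\ c (z k) (x (n.-1 - k)) = chi) /\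
    (forall k, k.+1 < n -> c (z k) (z k.+1) = chi).
Proof.
move=> x_rich.
set D := fun k => filter (fun w => c w (x (n.-1 - k)) == chi) (left_block n (idx k)).
have D_sorted k : k < n -> sorted ltn (D k) by move=> _; exact: sorted_iota_filter.
have D_lt k : k < n -> all (fun y => y < ramsey_bound n) (D k).
  move=> lt_k; apply/allP => y; rewrite mem_filter => /andP[_].
  exact: left_block_lt (idx_lt _ lt_k).
have D_size k : k < n -> rich_size n <= size (D k).
  move=> lt_k; rewrite size_filter.
  have /x_rich : n.-1 - k < n by lia.
  by rewrite mem_filter /rich (_ : n.-1 - (n.-1 - k) = k); [case/andP | lia].
have D_before k : k.+1 < n -> forall u v, u \in D k -> v \in D k.+1 -> u < v.
  move=> lt_k u v; rewrite !mem_filter => /andP[_ u_in] /andP[_ v_in].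
  exact: left_before_left (idx_increasing _ _ (ltnSn k) lt_k) u_in v_in.
have [|[z [zD z_path]]] := @rail n _ chi D n_gt0 D_sorted D_lt D_size D_before; first by left.
right; exists z; split => // k /zD; rewrite mem_filter => /andP[/eqP z_chi z_in].
by split.
Qed.

Lemma ladder_in_bound : ladder_copy n (ramsey_bound n).
Proof.
have [|[x [x_rich x_path]]] := right_rail; first by [].
have [|[z [z_left z_path]]] := left_rail _ x_rich; first by [].
have x_right j : j < n -> x j \in right_block n (idx (n.-1 - j)).
  by move=> /x_rich; rewrite mem_filter => /andP[].
have lt_mirror j : j < n -> n.-1 - j < n by lia.
apply: (@rungs_ladder n _ chi (mkseq z n) (mkseq x n)); rewrite ?size_mkseq //.
- apply: sorted_mkseq => k lt_k; rewrite /mono_edge z_path // eqxx andbT.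
  have [z_in _] := z_left k (ltnW lt_k); have [z'_in _] := z_left k.+1 lt_k.
  exact: left_before_left (idx_increasing _ _ (ltnSn k) lt_k) z_in z'_in.
- apply: sorted_mkseq => k lt_k; rewrite /mono_edge x_path // eqxx andbT.
  apply: (right_before_right _ _ (x_right k (ltnW lt_k)) (x_right k.+1 lt_k)).
    by apply: idx_increasing; lia.
  by apply: idx_lt; lia.
- apply/allP => y /mapP[k]; rewrite mem_iota => /andP[_ lt_k] ->.
  by have [z_in _] := z_left k lt_k; exact: left_block_lt (idx_lt _ lt_k) z_in.
- apply/allP => y /mapP[j]; rewrite mem_iota => /andP[_ lt_j] ->.
  exact: right_block_lt (idx_lt _ (lt_mirror j lt_j)) (x_right j lt_j).
- move=> u v /mapP[k]; rewrite mem_iota => /andP[_ lt_k] -> /mapP[j].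
  rewrite mem_iota => /andP[_ lt_j] ->; have [z_in _] := z_left k lt_k.
  exact: left_before_right (idx_lt _ lt_k) (idx_lt _ (lt_mirror j lt_j)) z_in (x_right j lt_j).
- by move=> k lt_k; rewrite !nth_mkseq ?(z_left k lt_k).2 //; lia.
Qed.

End Assembly.

Lemma ladder_copy_exists n N : 0 < n -> ramsey_bound n <= N -> ladder_copy n N.
Proof.
move=> n_gt0 le_N; apply: ladder_copy_mono le_N _.
have [chi [idx [idx_increasing idx_lt kappa_idx]]] := majority_indices (kappa n) n.
exact: ladder_in_bound idx_increasing idx_lt kappa_idx.
Qed.

End Colouring.

Lemma ladder_adj_edge {n : nat} {p q : 'I_(2 * n)} : p < q -> ladder_adj n p q ->
  (q == p.+1 :> nat) || (p + q == (2 * n).-1).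
Proof.
move=> lt_pq; rewrite /ladder_adj.
case/orP => [/andP[/eqP <- _] | ]; first by rewrite eqxx.
case/orP => [/andP[/eqP eq_p _] | ]; first lia.
case/orP => [/andP[/eqP <- _] | ]; first by rewrite eqxx.
case/orP => [/andP[/eqP eq_p _] | ]; first lia.
by move=> ->; rewrite orbT.
Qed.

Theorem mainTheorem4 (n : nat) (hn : 1 <= n) :
  @ordered_ramsey_le (2 * n) (@ladder_adj n) (2 * n) (@ladder_adj n) (32 * n ^ 3).
Proof.
set N := 32 * n ^ 3; exists N => // c.
have N_gt0 : 0 < N by rewrite muln_gt0 expn_gt0 hn.
pose x0 : 'I_N := Ordinal N_gt0.
(* Extend c to a colouring of pairs of naturals and restrict a ladder back. *)
pose c_nat a b := c (insubd x0 a) (insubd x0 b).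
have [k [s [size_s sorted_s s_lt_N ladder_s]]] :=
  @ladder_copy_exists c_nat n N hn (ramsey_bound_le n).
pose f (p : 'I_(2 * n)) : 'I_N := insubd x0 (nth 0 s p).
have f_val (p : 'I_(2 * n)) : nat_of_ord (f p) = nth 0 s p.
  by rewrite /f val_insubd (allP s_lt_N) // mem_nth // size_s.
have copy : @has_mono_copy (2 * n) (@ladder_adj n) N c k.
  exists f; split => [p q lt_pq | p q lt_pq adj_pq].
    by rewrite !f_val; apply: (sorted_ltn_nth ltn_trans 0 sorted_s); rewrite ?inE ?size_s.
  exact: ladder_s p q lt_pq (ltn_ord q) (ladder_adj_edge lt_pq adj_pq).
by case: k {ladder_s} copy; [right | left].
Qed.
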